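(* Let $m\geq 1$, $a\ge 1$ and $n,p>1$ be integers, and let $G$ be an $r$-regular graph of order $m$. If $n\equiv 0\pmod 2$ or $apm\equiv 1\pmod 2$, then $G\circ aH_{n,p}$ is distance magic.
   Context: A graph $G$ on $v$ vertices is distance magic if there is a bijection $f:V(G)\to\{1,\ldots,v\}$ and a constant $k$ such that for every vertex $x$, $\sum_{y\in N(x)}f(y)=k$, where $N(x)$ is the set of neighbours of $x$. $H_{n,p}$ denotes the complete multipartite graph with $p$ partite sets each of size $n$; $aH$ denotes the disjoint union of $a$ copies of $H$. The lexicographic product $G\circ H$ has vertex set $V(G)\times V(H)$, with $(g,h)$ adjacent to $(g',h')$ iff either $gg'\in E(G)$, or $g=g'$ and $hh'\in E(H)$. *)

From mathcomp Require Import all_boot.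
Set Implicit Arguments. Unset Strict Implicit. Unset Printing Implicit Defensive.

Definition simple_graph (T : finType) (e : rel T) : Prop :=
  symmetric e /\ irreflexive e.

Definition nbhd (T : finType) (e : rel T) (x : T) : {set T} := [set y | e x y].

Definition regular (T : finType) (e : rel T) (r : nat) : Prop :=
  forall x : T, #|nbhd e x| = r.

Definition distance_magic (T : finType) (e : rel T) : Prop :=
  exists f : T -> nat,
    injective f /\ (forall x, 1 <= f x <= #|T|) /\
    exists k : nat, forall x : T, \sum_(y in nbhd e x) f y = k.

(* complete multipartite graph H_{n,p}: vertex (i, j) = j-th vertex of part i;
   p parts of size n *)
Definition Hnp (n p : nat) : rel ('I_p * 'I_n) :=
  fun x y => x.1 != y.1.

Definition copies (a : nat) (U : finType) (h : rel U) : rel ('I_a * U) :=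
  fun x y => (x.1 == y.1) && h x.2 y.2.

Definition lexprod (T U : finType) (g : rel T) (h : rel U) : rel (T * U) :=
  fun x y => g x.1 y.1 || ((x.1 == y.1) && h x.2 y.2).
Arguments Hnp n p : clear implicits.
Arguments copies a {U} h.

(* Every vertex of G ∘ aH_{n,p} is adjacent to whole "blocks" {(t, c, i)} × 'I_n
   (the independent sets of size n of the copies of H_{n,p}), and to the same
   number r a p + (p - 1) of them.  Hence it suffices to label the m a p blocks
   with 1, ..., m a p n so that every block has the same sum.  Give the j-th
   vertex of block k the label j q + s_j(k) + 1, q = m a p, where every s_j
   permutes {0, ..., q - 1} and the row sums of the q × n array s_j(k) are
   constant.  For n even, alternate the columns k and q - 1 - k; for q odd and
   n odd (so n >= 3) put a 3 × q magic rectangle in front of such pairs. *)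
From mathcomp Require Import all_boot zify.
Set Implicit Arguments. Unset Strict Implicit. Unset Printing Implicit Defensive.

Definition balanced_columns (q n : nat) (s : nat -> nat -> nat) : Prop :=
  [/\ forall j k, j < n -> k < q -> s j k < q,
      forall j k k', j < n -> k < q -> k' < q -> s j k = s j k' -> k = k'
    & exists S, forall k, k < q -> \sum_(j < n) s j k = S].

Lemma balanced_columns0 q s : balanced_columns q 0 s.
Proof. by split=> //; exists 0 => k _; rewrite big_ord0. Qed.

Lemma balanced_columns_cat q n1 n2 s1 s2 :
  balanced_columns q n1 s1 -> balanced_columns q n2 s2 ->
  balanced_columns q (n1 + n2) (fun j => if j < n1 then s1 j else s2 (j - n1)).
Proof.
move=> [lt1 inj1 [S1 sum1]] [lt2 inj2 [S2 sum2]]; split.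
- move=> j k jn kq; case: (ltnP j n1) => j_n1; first exact: lt1.
  by apply: lt2 => //; lia.
- move=> j k k' jn kq k'q; case: (ltnP j n1) => j_n1; first exact: inj1.
  by apply: inj2 => //; lia.
exists (S1 + S2) => k kq; rewrite big_split_ord /= -(sum1 k kq) -(sum2 k kq).
congr (_ + _); apply: eq_bigr => j _; first by rewrite ltn_ord.
by rewrite ltnNge leq_addr /= addKn.
Qed.

Lemma balanced_columns_reversal q :
  balanced_columns q 2 (fun j k => if j == 0 then k else q.-1 - k).
Proof.
split=> [j k _|j k k' _|]; try by case: (j == 0); lia.
by exists q.-1 => k kq; rewrite !big_ord_recr big_ord0 /=; lia.
Qed.

Lemma balanced_columns_even q l : exists s, balanced_columns q l.*2 s.
Proof.
elim: l => [|l [s bal_s]]; first by exists (fun _ => id); apply: balanced_columns0.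
rewrite doubleS -add2n; eexists.
exact: balanced_columns_cat (balanced_columns_reversal q) bal_s.
Qed.

Definition magic_triple (h j k : nat) : nat :=
  if j == 0 then k
  else if j == 1 then (if k < h then k + h + 1 else k - h)
  else if k < h then 2 * h - 1 - 2 * k else 4 * h - 2 * k.

Lemma balanced_columns_magic_triple h :
  balanced_columns (2 * h + 1) 3 (magic_triple h).
Proof.
rewrite /magic_triple; split=> [j k _|j k k' _|]; try by repeat case: ifP; lia.
exists (3 * h) => k kq; rewrite !big_ord_recr big_ord0 /=.
by case: ifP; lia.
Qed.

Lemma balanced_columns_exist q n :
  ~~ odd n \/ odd q && (1 < n) -> exists s, balanced_columns q n s.
Proof.
case: (boolP (odd n)) => [n_odd [//|/andP [q_odd n_gt1]] | n_even _]; last first.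
  by rewrite -[n]odd_double_half (negbTE n_even); apply: balanced_columns_even.
have [h ->] : exists h, q = 2 * h + 1.
  by exists q./2; rewrite -[q in LHS]odd_double_half q_odd; lia.
have [s bal_s] := balanced_columns_even (2 * h + 1) (n - 3)./2.
have -> : n = 3 + (n - 3)./2.*2.
  by rewrite -[n in LHS]odd_double_half n_odd; move: n_gt1 n_odd; lia.
by eexists; exact: balanced_columns_cat (balanced_columns_magic_triple h) bal_s.
Qed.

Lemma mixed_radix_inj q j j' x x' :
  x < q -> x' < q -> j * q + x = j' * q + x' -> j = j' /\ x = x'.
Proof.
move=> x_lt x'_lt eq_jx; have eq_j : j = j' by nia.
by split=> //; move: eq_jx; rewrite eq_j => /addnI.
Qed.

Lemma mixed_radix_lt q n j x : j < n -> x < q -> j * q + x < q * n.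
Proof. by nia. Qed.

Lemma block_labelling_exists (B : finType) (n : nat) :
  (exists s, balanced_columns #|B| n s) ->
  exists g : B * 'I_n -> nat,
    [/\ injective g, forall u, 1 <= g u <= #|B| * n
      & exists K, forall b, \sum_(j < n) g (b, j) = K].
Proof.
move=> [s [s_lt s_inj [S s_sum]]].
have s_rank_lt (j : 'I_n) (b : B) : s j (enum_rank b) < #|B|.
  exact: s_lt (ltn_ord j) (ltn_ord (enum_rank b)).
exists (fun u : B * 'I_n => u.2 * #|B| + s u.2 (enum_rank u.1) + 1); split.
- move=> [b j] [b' j'] /= /addIn /mixed_radix_inj [] // /val_inj eq_j.
  subst j' => /(s_inj j _ _ (ltn_ord j) (ltn_ord _) (ltn_ord _)).
  by move/val_inj/enum_rank_inj ->.
- by move=> [b j] /=; rewrite addn1 ltnS mixed_radix_lt.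
exists (\sum_(j < n) j * #|B| + S + n) => b.
by rewrite !big_split /= s_sum // sum1_card card_ord.
Qed.

Lemma distance_magic_of_blocks (V B : finType) (n d : nat) (e : rel V)
    (h : B * 'I_n -> V) (N : V -> {set B}) :
  bijective h -> (forall x b j, e x (h (b, j)) = (b \in N x)) ->
  (forall x, #|N x| = d) -> (exists s, balanced_columns #|B| n s) ->
  distance_magic e.
Proof.
move=> bij_h e_h card_N /block_labelling_exists [g [g_inj g_bound [K g_sum]]].
have [h' hK h'K] := bij_h.
exists (g \o h'); split; first exact: inj_comp g_inj (can_inj h'K).
split=> [x|]; first by rewrite -(bij_eq_card bij_h) card_prod card_ord /= g_bound.
exists (d * K) => x; rewrite (reindex h) /=; last exact: onW_bij.
under eq_bigr do rewrite hK.
rewrite (eq_big (fun u => (u.1 \in N x) && true) (fun u => g (u.1, u.2))); last 2 first.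
- by move=> [b j]; rewrite inE e_h andbT.
- by case.
rewrite -(pair_big_dep (fun b => b \in N x) (fun _ _ => true) (fun b j => g (b, j))).
by under eq_bigr do rewrite g_sum; rewrite sum_nat_const card_N.
Qed.

Section LexprodCopiesHnp.

Variables (T : finType) (e : rel T) (a n p : nat).

Definition lexprod_blocks (x : T * ('I_a * ('I_p * 'I_n))) : {set T * ('I_a * 'I_p)} :=
  setX (nbhd e x.1) setT :|: setX [set x.1] (setX [set x.2.1] [set~ x.2.2.1]).

Definition lexprod_vertex (u : (T * ('I_a * 'I_p)) * 'I_n) : T * ('I_a * ('I_p * 'I_n)) :=
  (u.1.1, (u.1.2.1, (u.1.2.2, u.2))).

Lemma lexprod_vertex_bij : bijective lexprod_vertex.
Proof.
by exists (fun x => ((x.1, (x.2.1, x.2.2.1)), x.2.2.2)) => [[[t [c i]] j]|[t [c [i j]]]].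
Qed.

Lemma lexprod_copies_HnpE x b j :
  lexprod e (copies a (Hnp n p)) x (lexprod_vertex (b, j)) = (b \in lexprod_blocks x).
Proof.
case: b => t [c i].
by rewrite !inE /lexprod /copies /Hnp /= !andbT (eq_sym t) (eq_sym c) (eq_sym i).
Qed.

Lemma card_lexprod_blocks r x :
  irreflexive e -> regular e r -> #|lexprod_blocks x| = r * (a * p) + p.-1.
Proof.
move=> e_irr e_reg; rewrite cardsU.
have -> : setX (nbhd e x.1) setT :&: setX [set x.1] (setX [set x.2.1] [set~ x.2.2.1]) = set0.
  apply/setP=> -[t u]; rewrite !inE /= andbT.
  by case: (t =P x.1) => [->|_]; rewrite ?e_irr ?andbF.
by rewrite cards0 subn0 !cardsX e_reg !cards1 cardsT cardsC1 !card_prod !card_ord !mul1n.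
Qed.

End LexprodCopiesHnp.

Theorem theorem12 (m a n p r : nat) (T : finType) (e : rel T) :
  1 <= m -> 1 <= a -> 1 < n -> 1 < p ->
  simple_graph e -> #|T| = m -> regular e r ->
  (n %% 2 = 0 \/ (a * p * m) %% 2 = 1) ->
  distance_magic (lexprod e (copies a (Hnp n p))).
Proof.
move=> _ _ n_gt1 _ [_ e_irr] card_T e_reg parity.
apply: (distance_magic_of_blocks (lexprod_vertex_bij T a n p)
                                 (@lexprod_copies_HnpE T e a n p)).
  by move=> x; exact: card_lexprod_blocks.
apply: balanced_columns_exist; rewrite !card_prod !card_ord card_T n_gt1 andbT.
rewrite mulnC !modn2 in parity.
by case: parity => par; [left | right]; move: par; case: odd.
Qed.
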